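(* Let $\mathfrak a$ be an abelian ideal of $\mathfrak b$ and suppose $\gamma_1,\gamma_2\in\Delta_{\mathfrak a}$ are strongly orthogonal. (i) If $\gamma_1+\delta\in\Delta^+$ for some $\delta\in\Delta^+$, then $\gamma_2+\delta\notin\Delta^+$. (ii) If $\gamma_1-\delta\in\Delta_{\mathfrak a}$ for some $\delta\in\Delta^+$, then $\gamma_2-\delta\notin\Delta_{\mathfrak a}$.
   Context: Let $G$ be a connected simple algebraic group over an algebraically closed field of characteristic zero, $B$ a Borel subgroup, $T\subset B$ a maximal torus, $\mathfrak b=\mathrm{Lie}(B)$, $\Delta$ the root system of $(G,T)$, $\Delta^+$ the positive roots determined by $B$. An abelian ideal of $\mathfrak b$ is a subspace $\mathfrak a\subset\mathfrak b$ with $[\mathfrak b,\mathfrak a]\subset\mathfrak a$, $[\mathfrak a,\mathfrak a]=0$; it is the sum of the root spaces for the roots in a subset $\Delta_{\mathfrak a}\subset\Delta^+$. Two distinct roots $\gamma_1,\gamma_2$ are strongly orthogonal if neither $\gamma_1+\gamma_2$ nor $\gamma_1-\gamma_2$ is a root. *)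

From HB Require Import structures.
From mathcomp Require Import all_boot all_order all_algebra.
Set Implicit Arguments. Unset Strict Implicit. Unset Printing Implicit Defensive.
Import Order.TTheory GRing.Theory Num.Theory.
Local Open Scope ring_scope.

Definition dotv (R : realFieldType) (n : nat) (u v : 'rV[R]_n) : R :=
  (u *m v^T) 0 0.

Definition cartan (R : realFieldType) (n : nat) (b a : 'rV[R]_n) : R :=
  2 * dotv b a / dotv a a.

Definition refl (R : realFieldType) (n : nat) (a b : 'rV[R]_n) : 'rV[R]_n :=
  b - cartan b a *: a.

Record root_system (R : realFieldType) (n : nat) (Phi : seq 'rV[R]_n) : Prop := {
  rs_uniq : uniq Phi;
  rs_nonzero : 0 \notin Phi;
  rs_refl : forall a b, a \in Phi -> b \in Phi -> refl a b \in Phi;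
  rs_cryst : forall a b, a \in Phi -> b \in Phi ->
      exists z : int, cartan b a = z%:~R;
  rs_reduced : forall a (c : R), a \in Phi -> c *: a \in Phi -> c = 1 \/ c = -1
}.

Definition irreducible_rs (R : realFieldType) (n : nat) (Phi : seq 'rV[R]_n) : Prop :=
  Phi != [::] /\
  forall P : pred 'rV[R]_n,
    (forall a b, a \in Phi -> b \in Phi -> P a -> ~~ P b -> dotv a b = 0) ->
    (forall a, a \in Phi -> P a) \/ (forall a, a \in Phi -> ~~ P a).

(* Regular vector: orthogonal to no root; it determines the positive system
   Delta^+ = { a in Phi | (a, v) > 0 } (every positive system is of this form). *)
Definition regular (R : realFieldType) (n : nat) (Phi : seq 'rV[R]_n) (v : 'rV[R]_n) :=
  forall a, a \in Phi -> dotv a v != 0.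

Definition posroot (R : realFieldType) (n : nat) (Phi : seq 'rV[R]_n) (v : 'rV[R]_n)
  (a : 'rV[R]_n) : bool := (a \in Phi) && (0 < dotv a v).

(* Delta_a of an abelian ideal a of b = sum of root spaces g_a, a in A:
   [b,a] in a  <->  A upper closed in Delta^+;  [a,a] = 0  <->  A sum-free. *)
Definition abelian_ideal (R : realFieldType) (n : nat) (Phi : seq 'rV[R]_n)
  (v : 'rV[R]_n) (A : pred 'rV[R]_n) : Prop :=
  [/\ forall a, A a -> posroot Phi v a,
      forall a b, A a -> posroot Phi v b -> a + b \in Phi -> A (a + b)
    & forall a b, A a -> A b -> a + b \notin Phi].

Definition strongly_orthogonal (R : realFieldType) (n : nat) (Phi : seq 'rV[R]_n)
  (g1 g2 : 'rV[R]_n) : Prop :=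
  [/\ g1 != g2, g1 + g2 \notin Phi & g1 - g2 \notin Phi].

(* Elements of an abelian ideal pairwise have nonnegative inner product:
   a negative one would make their sum a root, against commutativity.
   Hence the strongly orthogonal roots g1, g2 of the ideal are orthogonal.
   If both g1 + e and g2 + e lie in the ideal (e = d after upper closedness
   for (i), e = -d for (ii)), expanding the nonnegative products
   (g1 + e, g2) and (g2 + e, g1) gives (g1 + e, g2 + e) >= (e, e) > 0, so
   their difference g1 - g2 is a root, contradicting strong orthogonality. *)
From mathcomp Require Import all_boot all_order all_algebra.
From mathcomp Require Import ring lra zify.
Import Order.TTheory GRing.Theory Num.Theory.
Local Open Scope ring_scope.

Section InnerProduct.
Context {R : realFieldType} {n : nat}.
Implicit Types (u v w : 'rV[R]_n).

Lemma dotvE u v : dotv u v = \sum_j u 0 j * v 0 j.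
Proof. by rewrite /dotv mxE; apply: eq_bigr => j _; rewrite mxE. Qed.

Lemma dotvC u v : dotv u v = dotv v u.
Proof. by rewrite !dotvE; apply: eq_bigr => j _; rewrite mulrC. Qed.

Lemma dotv0l v : dotv 0 v = 0.
Proof. by rewrite /dotv mul0mx mxE. Qed.

Lemma dotvDl u w v : dotv (u + w) v = dotv u v + dotv w v.
Proof. by rewrite !dotvE -big_split; apply: eq_bigr => j _; rewrite mxE mulrDl. Qed.

Lemma dotvZl c u v : dotv (c *: u) v = c * dotv u v.
Proof. by rewrite !dotvE mulr_sumr; apply: eq_bigr => j _; rewrite mxE mulrA. Qed.

Lemma dotvNl u v : dotv (- u) v = - dotv u v.
Proof. by rewrite -scaleN1r dotvZl mulN1r. Qed.

Lemma dotvBl u w v : dotv (u - w) v = dotv u v - dotv w v.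
Proof. by rewrite dotvDl dotvNl. Qed.

Lemma dotvDr u w v : dotv v (u + w) = dotv v u + dotv v w.
Proof. by rewrite dotvC dotvDl !(dotvC v). Qed.

Lemma dotvZr c u v : dotv v (c *: u) = c * dotv v u.
Proof. by rewrite dotvC dotvZl dotvC. Qed.

Lemma dotvNr u v : dotv v (- u) = - dotv v u.
Proof. by rewrite dotvC dotvNl dotvC. Qed.

Lemma dotvBr u w v : dotv v (u - w) = dotv v u - dotv v w.
Proof. by rewrite dotvDr dotvNr. Qed.

Lemma dotv_ge0 u : 0 <= dotv u u.
Proof. by rewrite dotvE; apply: sumr_ge0 => j _; nra. Qed.

Lemma dotv_eq0 u : (dotv u u == 0) = (u == 0).
Proof.
apply/eqP/eqP => [|->]; last exact: dotv0l.
rewrite dotvE => /psumr_eq0P sq0; apply/rowP => j; rewrite mxE.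
have /eqP : u 0 j * u 0 j = 0 by apply: sq0 => // i _; nra.
by rewrite mulf_eq0 orbb => /eqP.
Qed.

Lemma dotv_gt0 u : (0 < dotv u u) = (u != 0).
Proof. by rewrite lt_def dotv_ge0 andbT dotv_eq0. Qed.

(* The equality case of Cauchy-Schwarz: [u - (u, w)/(w, w) w] has square norm
   [((u, u)(w, w) - (u, w)^2) / (w, w)]. *)
Lemma dotv_sqr_ge_colinear u w : w != 0 ->
  dotv u u * dotv w w <= dotv u w ^+ 2 -> u = (dotv u w / dotv w w) *: w.
Proof.
rewrite -dotv_gt0 => w_gt0 uw_ge; set p := dotv u w.
have ww_neq0 : dotv w w != 0 by rewrite gt_eqF.
set r := dotv w w *: u - p *: w.
have rr : dotv r r = dotv w w * (dotv u u * dotv w w - p ^+ 2).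
  by rewrite /r !(dotvBl, dotvBr, dotvZl, dotvZr) (dotvC w u) -/p; ring.
have /eqP : r = 0.
  apply/eqP; rewrite -dotv_eq0 eq_le dotv_ge0 andbT rr pmulr_rle0 // subr_le0.
  exact: uw_ge.
rewrite /r subr_eq0 => /eqP wu.
by rewrite -[LHS](scalerK ww_neq0) wu scalerA mulrC.
Qed.

Lemma dotv_shift_gt0 {g1 g2 e : 'rV[R]_n} : dotv g1 g2 = 0 -> e != 0 ->
  0 <= dotv (g1 + e) g2 -> 0 <= dotv (g2 + e) g1 ->
  0 < dotv (g1 + e) (g2 + e).
Proof.
move=> g12; rewrite -dotv_gt0 !(dotvDl, dotvDr) (dotvC g2 g1) (dotvC e g1) g12.
lra.
Qed.

End InnerProduct.

Section RootSystem.
Context {R : realFieldType} {n : nat} {Phi : seq 'rV[R]_n}.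
Variable rsPhi : root_system Phi.
Implicit Types (a b : 'rV[R]_n).

Lemma root_neq0 {a} : a \in Phi -> a != 0.
Proof. by apply: contraTneq => ->; exact: rs_nonzero. Qed.

Lemma root_dotv_gt0 {a} : a \in Phi -> 0 < dotv a a.
Proof. by rewrite dotv_gt0; exact: root_neq0. Qed.

Lemma rootN {a} : a \in Phi -> - a \in Phi.
Proof.
move=> aP; have := rs_refl rsPhi aP aP.
rewrite /refl /cartan mulfK ?gt_eqF ?root_dotv_gt0 //.
by rewrite scaler_nat mulr2n opprD addrA subrr add0r.
Qed.

Lemma cartan_eqN1_or_leN2 {a b} : a \in Phi -> b \in Phi -> dotv a b < 0 ->
  cartan b a = -1 \/ cartan b a <= -2.
Proof.
move=> aP bP ab_lt0; have [z baz] := rs_cryst rsPhi aP bP.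
have z_lt0 : z < 0.
  rewrite -(ltrz0 R) -baz /cartan dotvC pmulr_llt0 ?invr_gt0 ?root_dotv_gt0 //; lra.
rewrite baz; have [->|zN1] := eqVneq z (-1); first by left.
by right; rewrite -[-2]/((-2)%:~R) ler_int; lia.
Qed.

Lemma addr_root {a b} : a \in Phi -> b \in Phi -> dotv a b < 0 -> a + b != 0 ->
  a + b \in Phi.
Proof.
move=> aP bP ab_lt0 ab_neq0.
have reflN1 (x y : 'rV[R]_n) : y \in Phi -> x \in Phi -> cartan x y = -1 -> x + y \in Phi.
  by move=> yP xP c; have := rs_refl rsPhi yP xP; rewrite /refl c scaleN1r opprK.
have [/(reflN1 b a aP bP)|ba] := cartan_eqN1_or_leN2 aP bP ab_lt0.
  by rewrite addrC.
have ba_lt0 : dotv b a < 0 by rewrite dotvC.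
have [/(reflN1 a b bP aP) //|ab] := cartan_eqN1_or_leN2 bP aP ba_lt0.
(* Both Cartan integers are <= -2, so (a, b)^2 >= (a, a)(b, b): a and b are
   proportional, and reducedness leaves only b = a or b = -a. *)
have aa := root_dotv_gt0 aP; have bb := root_dotv_gt0 bP.
move: ab ba; rewrite /cartan (dotvC b a) !ler_pdivrMr // => ab ba.
have colin : a = (dotv a b / dotv b b) *: b.
  by apply: dotv_sqr_ge_colinear (root_neq0 bP) _; nra.
move: (aP); rewrite colin => /(rs_reduced rsPhi bP) [c1|cN1].
  by move: ab_lt0; rewrite colin dotvZl c1 mul1r; lra.
by move: ab_neq0; rewrite colin cN1 scaleN1r addNr eqxx.
Qed.

Lemma subr_root {a b} : a \in Phi -> b \in Phi -> 0 < dotv a b -> a != b ->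
  a - b \in Phi.
Proof.
move=> aP bP ab_gt0 ab_neq; apply: addr_root; rewrite ?subr_eq0 ?rootN //.
by rewrite dotvNr oppr_lt0.
Qed.

Lemma strongly_orthogonal_dotv_eq0 {g1 g2 : 'rV[R]_n} :
  g1 \in Phi -> g2 \in Phi -> strongly_orthogonal Phi g1 g2 -> g1 + g2 != 0 ->
  dotv g1 g2 = 0.
Proof.
move=> g1P g2P [g12_neq g12_add g12_sub] g12_neq0.
case: (ltgtP (dotv g1 g2) 0) => // [g12_lt0|g12_gt0].
  by move: g12_add; rewrite (addr_root g1P g2P g12_lt0 g12_neq0).
by move: g12_sub; rewrite (subr_root g1P g2P g12_gt0 g12_neq).
Qed.

End RootSystem.

Section AbelianIdeal.
Context {R : realFieldType} {n : nat} {Phi : seq 'rV[R]_n}.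
Variable rsPhi : root_system Phi.
Context {v : 'rV[R]_n} {A : pred 'rV[R]_n}.
Hypothesis idealA : abelian_ideal Phi v A.

Lemma posroot_addr_neq0 {a b} : posroot Phi v a -> posroot Phi v b -> a + b != 0.
Proof.
move=> /andP[_ av] /andP[_ bv]; apply: contraTneq isT => ab0.
by have := dotvDl a b v; rewrite ab0 dotv0l; lra.
Qed.

Lemma ideal_posroot {a} : A a -> posroot Phi v a.
Proof. by case: idealA => + _ _; apply. Qed.

Lemma ideal_root {a} : A a -> a \in Phi.
Proof. by move/ideal_posroot/andP => []. Qed.

Lemma ideal_dotv_ge0 {a b} : A a -> A b -> 0 <= dotv a b.
Proof.
move=> Aa Ab; rewrite leNgt; apply/negP => ab_lt0.
case: idealA => _ _ /(_ a b Aa Ab); apply/negP/negPn.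
exact: (addr_root rsPhi (ideal_root Aa) (ideal_root Ab) ab_lt0
  (posroot_addr_neq0 (ideal_posroot Aa) (ideal_posroot Ab))).
Qed.

Lemma ideal_strongly_orthogonal_shift {g1 g2 : 'rV[R]_n} : A g1 -> A g2 ->
  strongly_orthogonal Phi g1 g2 ->
  forall e, e != 0 -> A (g1 + e) -> ~~ A (g2 + e).
Proof.
move=> A1 A2 so12 e e_neq0 A1e; apply/negP => A2e.
have g12 : dotv g1 g2 = 0.
  apply: (strongly_orthogonal_dotv_eq0 rsPhi (ideal_root A1) (ideal_root A2) so12).
  exact: posroot_addr_neq0 (ideal_posroot A1) (ideal_posroot A2).
have shift_gt0 := dotv_shift_gt0 g12 e_neq0
  (ideal_dotv_ge0 A1e A2) (ideal_dotv_ge0 A2e A1).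
have [g12_neq _ g12_sub] := so12.
have := subr_root rsPhi (ideal_root A1e) (ideal_root A2e) shift_gt0.
rewrite (inj_eq (addIr e)) opprD addrACA subrr addr0 (negbTE g12_sub).
by move/(_ g12_neq).
Qed.

End AbelianIdeal.

Theorem lemma1p3 (R : realFieldType) (n : nat) (Phi : seq 'rV[R]_n)
  (v : 'rV[R]_n) (A : pred 'rV[R]_n) (g1 g2 : 'rV[R]_n) :
  root_system Phi -> irreducible_rs Phi -> regular Phi v ->
  abelian_ideal Phi v A -> A g1 -> A g2 -> strongly_orthogonal Phi g1 g2 ->
  (forall d, posroot Phi v d -> posroot Phi v (g1 + d) -> ~~ posroot Phi v (g2 + d)) /\
  (forall d, posroot Phi v d -> A (g1 - d) -> ~~ A (g2 - d)).
Proof.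
move=> rsPhi _ _ idealA A1 A2 so12.
have shift := ideal_strongly_orthogonal_shift rsPhi idealA A1 A2 so12.
have [_ upA _] := idealA.
split=> d d_pos; have d_neq0 : d != 0 by rewrite (root_neq0 rsPhi (andP d_pos).1).
- move=> /andP[g1dP _]; apply: contraTN (shift d d_neq0 (upA _ _ A1 d_pos g1dP)).
  by move=> /andP[g2dP _]; apply/negPn/upA.
- by apply: shift; rewrite oppr_eq0.
Qed.
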